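(* Let $F$ be a finite abelian group. Then: (i) $A_F(G_F)\subseteq C_F:=\big\{|F|-4k\mid k=0,\ldots,\lfloor |F|/2\rfloor\big\}^F\cap\mathbb R^F_{\rm ev}$, and $|F|\,\mathbf 1_F\in A_F(G_F)$, where $\mathbf 1_F$ is the constant function $1$; (ii) in general $A_F(G_F)$ is not a convex subset of $C_F$: there exists a finite abelian group $F$ for which $A_F(G_F)$ is not convex; (iii) for every $g\in\mathrm{Aut}(F)$ one has $A_F\circ\Psi^{(G)}_g=\Psi^{(\rm ev)}_g\circ A_F$, and $A_F(G_F)$ is invariant under $\Psi^{(\rm ev)}_g$.
   Context: $F$ is a finite abelian group (additive), $G_F=\{-1,1\}^F$, and $A_F:G_F\to\mathbb Z^F$ is $A_F(\sigma)_f=\sum_{\ell\in F}\sigma_\ell\sigma_{\ell+f}$. $\mathbb R^F_{\rm ev}=\{h\in\mathbb R^F: h_{-f}=h_f\ \forall f\}$. A subset $S\subseteq C_F$ is called convex if whenever $s_0,s_1\in S$, $t\in(0,1)$ and $s_t:=(1-t)s_0+ts_1\in C_F$, then $s_t\in S$. For $g\in\mathrm{Aut}(F)$ define $\Psi^{(G)}_g:G_F\to G_F$, $\Psi^{(G)}_g(\sigma)_f=\sigma_{g^{-1}(f)}$, and $\Psi^{(\rm ev)}_g:\mathbb R^F_{\rm ev}\to\mathbb R^F_{\rm ev}$, $\Psi^{(\rm ev)}_g(h)_f=h_{g^{-1}(f)}$. *)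

From HB Require Import structures.
From mathcomp Require Import all_boot all_order all_algebra all_fingroup.
From mathcomp Require Import reals.
Set Implicit Arguments. Unset Strict Implicit. Unset Printing Implicit Defensive.
Import Order.TTheory GRing.Theory Num.Theory.
Local Open Scope ring_scope.

Section Defs.
Variable F : finZmodType.

Definition isSign (s : F -> int) : Prop := forall l : F, s l = 1 \/ s l = -1.

Definition AF (s : F -> int) (f : F) : int := \sum_(l : F) s l * s (l + f).

Variable R : realType.

Definition AFimg : (F -> R) -> Prop :=
  fun h => exists s, isSign s /\ h = (fun f => (AF s f)%:~R).

Definition isEven (h : F -> R) : Prop := forall f : F, h (- f) = h f.

Definition CF (h : F -> R) : Prop :=
  (forall f : F, exists k : nat, (k <= #|F|./2)%N /\ h f = #|F|%:R - 4 * k%:R)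
  /\ isEven h.

Definition convexC (S : (F -> R) -> Prop) : Prop :=
  forall (s0 s1 : F -> R) (t : R), S s0 -> S s1 -> 0 < t < 1 ->
    CF (fun f => (1 - t) * s0 f + t * s1 f) ->
    S (fun f => (1 - t) * s0 f + t * s1 f).

Definition isAut (g : {perm F}) : Prop := forall x y : F, g (x + y) = g x + g y.

(* Psi_g(sigma)_f = sigma_(g^-1 f); used both for Psi^(G) and Psi^(ev) *)
Definition Psi (T : Type) (g : {perm F}) (s : F -> T) : F -> T :=
  fun f => s ((g^-1)%g f).

End Defs.

From HB Require Import structures.
From mathcomp Require Import all_boot all_order all_algebra all_fingroup.
From mathcomp Require Import reals.
From mathcomp Require Import boolp zify lra.

Set Implicit Arguments.
Unset Strict Implicit.
Unset Printing Implicit Defensive.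
Import Order.TTheory GRing.Theory Num.Theory.
Local Open Scope ring_scope.

(** For a sign vector [s], each term [s l * s (l + f)] of [AF s f] is [1] or
    [-1]; if [n] terms are [-1] then [AF s f = |F| - 2 n], and [n] is even
    because the product of all terms is [(\prod_l s l)^2 = 1].  Hence the
    values [|F| - 4 k].  On [Z/4] the autocorrelations of the characters [1]
    and [(-1)^l] are [(4,4,4,4)] and [(4,-4,4,-4)]; their midpoint
    [(4,0,4,0)] lies in [C_F], but [AF s 2 = 4] forces [s] to be 2-periodic,
    and then [AF s 1 = 4 s_0 s_1 <> 0].  Equivariance under automorphisms is
    a reindexing of the sum defining [AF]. *)

Section Autocorrelation.
Variables (F : finZmodType) (s : F -> int).

Lemma AF_opp (f : F) : AF s (- f) = AF s f.
Proof.
rewrite /AF (reindex_inj (can_inj (addrK f))) /=.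
by apply: eq_bigr => l _; rewrite addrK mulrC.
Qed.

Hypothesis s_sign : isSign s.

Lemma sign_mulss (l : F) : s l * s l = 1.
Proof. by case: (s_sign l) => ->. Qed.

Lemma sign_mul_neqN1 (l m : F) : s l * s m != -1 -> s l * s m = 1.
Proof. by case: (s_sign l) => ->; case: (s_sign m) => ->. Qed.

Definition sign_changes (f : F) : nat := #|[pred l | s l * s (l + f) == -1]|.

Lemma AF_sign_changes (f : F) : AF s f = #|F|%:Z - 2 * (sign_changes f)%:Z.
Proof.
set P := [pred l | s l * s (l + f) == -1].
have -> : AF s f = \sum_(l in P) (-1) + \sum_(l in [predC P]) 1.
  rewrite /AF (bigID P); congr (_ + _); apply: eq_big => // l.
  - by move/eqP.
  - by move/sign_mul_neqN1.
rewrite !sumr_const -(cardC P) /sign_changes -/P.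
move: #|P| #|[predC P]| => n m.
by rewrite mulNrn !natz PoszD; lia.
Qed.

Lemma sign_changes_even (f : F) : ~~ odd (sign_changes f).
Proof.
set P := [pred l | s l * s (l + f) == -1].
have prod1 : \prod_l (s l * s (l + f)) = 1.
  rewrite big_split /= [X in _ * X](_ : _ = \prod_l s l); last first.
    by rewrite [RHS](reindex_inj (addIr f)).
  by rewrite -big_split /=; apply: big1 => l _; exact: sign_mulss.
have : \prod_l (s l * s (l + f))
         = \prod_(l in P) (-1) * \prod_(l in [predC P]) 1.
  rewrite (bigID P); congr (_ * _); apply: eq_big => // l.
  - by move/eqP.
  - by move/sign_mul_neqN1.
rewrite prod1 !prodr_const expr1n mulr1 -signr_odd /sign_changes -/P.
by case: (odd _).
Qed.

Lemma AF_card_sub4 (f : F) :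
  exists k : nat, (k <= #|F|./2)%N /\ AF s f = #|F|%:Z - 4 * k%:Z.
Proof.
exists (sign_changes f)./2; split; first exact/half_leq/max_card.
have := odd_double_half (sign_changes f).
rewrite (negbTE (sign_changes_even f)) add0n AF_sign_changes -muln2 => n2.
by rewrite -[in LHS]n2; lia.
Qed.

Lemma AF_eq_card_periodic (f : F) : AF s f = #|F| -> forall l, s (l + f) = s l.
Proof.
rewrite AF_sign_changes => eq_card l.
have /card0_eq/(_ l) : sign_changes f = 0%N by lia.
rewrite !inE => /negbT/sign_mul_neqN1 prod1.
by rewrite -[LHS]mul1r -(sign_mulss l) -mulrA prod1 mulr1.
Qed.

Lemma AF_character (f : F) :
  (forall l m, s (l + m) = s l * s m) -> AF s f = #|F|%:Z * s f.
Proof.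
move=> sD; rewrite /AF (eq_bigr (fun=> s f)) => [|l _]; last first.
  by rewrite sD mulrA sign_mulss mul1r.
by rewrite sumr_const -mulr_natl natz.
Qed.

End Autocorrelation.

Section Automorphisms.
Variables (F : finZmodType) (g : {perm F}).
Hypothesis g_aut : isAut g.

Lemma isAut_inv : isAut (g^-1)%g.
Proof. by move=> x y; apply: (@perm_inj _ g); rewrite g_aut !permKV. Qed.

Lemma AF_Psi (s : F -> int) : AF (Psi g s) = Psi g (AF s).
Proof.
apply: funext => f.
rewrite /AF /Psi (reindex_inj (@perm_inj _ g)) /=.
by apply: eq_bigr => l _; rewrite isAut_inv !permK.
Qed.

Lemma isSign_Psi (s : F -> int) : isSign s -> isSign (Psi g s).
Proof. by move=> s_sign l; apply: s_sign. Qed.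

Lemma AFimg_Psi (R : realType) (h : F -> R) : AFimg h -> AFimg (Psi g h).
Proof.
move=> [s [s_sign ->]]; exists (Psi g s); split; first exact: isSign_Psi.
by rewrite AF_Psi.
Qed.

End Automorphisms.

Lemma PsiVK (F : finZmodType) (T : Type) (g : {perm F}) (h : F -> T) :
  Psi g (Psi (g^-1)%g h) = h.
Proof. by apply: funext => f; rewrite /Psi invgK permKV. Qed.

Lemma AFimg_CF (F : finZmodType) (R : realType) (h : F -> R) : AFimg h -> CF h.
Proof.
move=> [s [s_sign ->]]; split=> [f | f]; last by rewrite AF_opp.
have [k [le_k ->]] := AF_card_sub4 s_sign f.
by exists k; split=> //; rewrite intrB intrM !pmulrn.
Qed.

Lemma AFimg_card (F : finZmodType) (R : realType) :
  AFimg (fun _ : F => (#|F|%:R : R)).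
Proof.
exists (fun=> 1); split=> [l | ]; first by left.
apply: funext => f.
rewrite AF_character => [|l|l m]; [by rewrite mulr1 | by left | by rewrite mulr1].
Qed.

Definition alt4 (l : 'I_4) : int := (-1) ^+ l.

Lemma alt4D (l m : 'I_4) : alt4 (l + m) = alt4 l * alt4 m.
Proof. by rewrite /alt4 -exprD -signr_odd /= odd_mod // signr_odd. Qed.

Lemma isSign_alt4 : isSign alt4.
Proof. by move=> l; rewrite /alt4 -signr_odd; case: (odd l); [right | left]. Qed.

Lemma AF_Z4_1 (s : 'I_4 -> int) :
  AF s 1 = s 0 * s 1 + s 1 * s 2 + s 2 * s 3 + s 3 * s 0.
Proof.
rewrite /AF !big_ord_recl big_ord0 addr0 !addrA.
by congr (_ + _ + _ + _); congr (s _ * s _); apply: val_inj.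
Qed.

Lemma AF_Z4_1_neq0 (s : 'I_4 -> int) :
  isSign s -> (forall l, s (l + 2) = s l) -> AF s 1 != 0.
Proof.
move=> s_sign s_per.
have s2 : s 2 = s 0 by rewrite -(s_per 0) add0r.
have s3 : s 3 = s 1 by rewrite -(s_per 1); congr s; apply: val_inj.
rewrite AF_Z4_1 s2 s3.
by case: (s_sign 0) => ->; case: (s_sign 1) => ->.
Qed.

Lemma not_convex_AFimg_Z4 (R : realType) : ~ convexC (@AFimg 'I_4 R).
Proof.
have A1 : AFimg (fun f : 'I_4 => ((#|'I_4|%:Z * alt4 f)%:~R : R)).
  exists alt4; split; first exact: isSign_alt4.
  apply: funext => f.
  by rewrite AF_character //; [exact: isSign_alt4 | exact: alt4D].
pose mid f : R := (1 - 2^-1) * #|'I_4|%:R + 2^-1 * (#|'I_4|%:Z * alt4 f)%:~R.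
have mid_alt f : mid f = 4 - 4 * (odd f)%:R.
  rewrite /mid card_ord /alt4 -signr_odd intrM pmulrn.
  by case: (odd f); rewrite /= ?expr1 ?expr0 ?rmorphN1 ?rmorph1; lra.
move=> convex.
have [_ A1_even] := AFimg_CF A1.
have mid_CF : CF mid.
  split=> f; last by rewrite /mid A1_even.
  by exists (odd f); rewrite mid_alt card_ord; split; first by case: odd.
have half01 : 0 < (2^-1 : R) < 1 by apply/andP; split; lra.
have [s [s_sign mid_AF]] := convex _ _ _ (@AFimg_card 'I_4 R) A1 half01 mid_CF.
have AF_s f : AF s f = 4 - 4 * (odd f)%:Z.
  apply: (@intr_inj R); rewrite -[LHS]/((fun f => (AF s f)%:~R) f) -mid_AF.
  by rewrite -/(mid f) mid_alt intrB intrM; case: odd.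
have AF_s2 : AF s 2 = #|'I_4| by rewrite AF_s card_ord.
have := AF_Z4_1_neq0 s_sign (AF_eq_card_periodic s_sign AF_s2).
by rewrite AF_s.
Qed.

Theorem mainTheorem4 (R : realType) :
  (forall F : finZmodType,
     (* (i) *)
     ((forall h : F -> R, AFimg h -> CF h)
      /\ AFimg (fun _ : F => (#|F|%:R : R)))
     (* (iii) *)
     /\ (forall g : {perm F}, isAut g ->
           (forall s : F -> int, isSign s ->
              AF (Psi g s) = Psi g (AF s))
           /\ (forall h : F -> R, AFimg h -> AFimg (Psi g h))
           /\ (forall h : F -> R, AFimg h ->
                 exists h' : F -> R, AFimg h' /\ Psi g h' = h)))
  /\
  (* (ii) *)
  (exists F : finZmodType, ~ convexC (@AFimg F R)).
Proof.
split; last by exists ('I_4 : finZmodType); exact: not_convex_AFimg_Z4.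
move=> F; split; first by split; [exact: AFimg_CF | exact: AFimg_card].
move=> g g_aut; split; first by move=> s _; exact: AF_Psi.
split=> h h_img; first exact: AFimg_Psi.
exists (Psi (g^-1)%g h); split; last exact: PsiVK.
exact: (AFimg_Psi (isAut_inv g_aut) h_img).
Qed.
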